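(* Let $T$ be a $C_{p^rq^s}$-transfer system and let $(a,b)$ be the lexicographically smallest vertex of its connected component in $T$. Then every vertex $(x,y)$ in that connected component satisfies $a\le x$ and $b\le y$.
   Context: $p,q$ are distinct primes and $r,s\ge 0$ integers. The subgroups of the cyclic group $C_{p^rq^s}$ are identified with grid points $(i,j)$, $0\le i\le r$, $0\le j\le s$, where $(i,j)$ stands for $C_{p^iq^j}$; $(i,j)\le(i',j')$ as subgroups iff $i\le i'$ and $j\le j'$, and intersection is $(\min(i,i'),\min(j,j'))$. A $C_{p^rq^s}$-transfer system is a partial order $\to$ on these vertices such that: $(i_1,j_1)\to(i_2,j_2)$ implies $i_1\le i_2$, $j_1\le j_2$; it is reflexive and transitive; and $(i_1,j_1)\to(i_2,j_2)$ implies $(\min\{i_1,a\},\min\{j_1,b\})\to(\min\{i_2,a\},\min\{j_2,b\})$ for every vertex $(a,b)$. Connected components are those of the underlying undirected graph. Lexicographic order: $(a,b)<_L(c,d)$ if $a<c$, or $a=c$ and $b<d$. *)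

From Stdlib Require Import Relations.
From mathcomp Require Import all_boot.
Set Implicit Arguments. Unset Strict Implicit. Unset Printing Implicit Defensive.

(* Subgroups of C_{p^r q^s}: grid points (i,j), 0<=i<=r, 0<=j<=s,
   (i,j) standing for C_{p^i q^j}. *)
Definition vertex (r s : nat) (v : nat * nat) : Prop := v.1 <= r /\ v.2 <= s.

(* Intersection of subgroups (i,j) and (a,b). *)
Definition grid_meet (v w : nat * nat) : nat * nat := (minn v.1 w.1, minn v.2 w.2).

Record transfer_system (r s : nat) (R : nat * nat -> nat * nat -> Prop) : Prop := {
  ts_dom     : forall u v, R u v -> vertex r s u /\ vertex r s v;
  ts_incl    : forall u v, R u v -> u.1 <= v.1 /\ u.2 <= v.2;
  ts_refl    : forall u, vertex r s u -> R u u;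
  ts_antisym : forall u v, R u v -> R v u -> u = v;
  ts_trans   : forall u v w, R u v -> R v w -> R u w;
  ts_restr   : forall u v w, R u v -> vertex r s w -> R (grid_meet u w) (grid_meet v w)
}.

Definition connected_in (R : nat * nat -> nat * nat -> Prop) : nat * nat -> nat * nat -> Prop :=
  clos_refl_sym_trans (nat * nat) R.

Definition lex_lt (u v : nat * nat) : Prop := u.1 < v.1 \/ (u.1 = v.1 /\ u.2 < v.2).

Definition lex_min_of_component (r s : nat) (R : nat * nat -> nat * nat -> Prop)
  (u : nat * nat) : Prop :=
  vertex r s u /\
  forall w, vertex r s w -> connected_in R u w -> w = u \/ lex_lt u w.

From Stdlib Require Import Relations.
From mathcomp Require Import all_boot.

(* Intersecting with the lexicographically minimal vertex (a, b) keeps a vertex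
   in the component of (a, b), since restriction maps each transfer to a
   transfer.  That vertex lies below (a, b) coordinatewise, so by minimality it
   is (a, b) itself, i.e. (a, b) lies below every vertex of the component. *)

Lemma clos_rst_homo (A B : Type) (RA : relation A) (RB : relation B) (f : A -> B) :
  (forall x y, RA x y -> RB (f x) (f y)) ->
  forall x y, clos_refl_sym_trans A RA x y -> clos_refl_sym_trans B RB (f x) (f y).
Proof.
move=> homo_f x y; elim=> [u v /homo_f|u|u v _|u v w _ IHuv _ IHvw].
- exact: rst_step.
- exact: rst_refl.
- exact: rst_sym.
- exact: rst_trans IHuv IHvw.
Qed.

Lemma connected_in_meet {r s R} (hT : transfer_system r s R) {w} :
  vertex r s w -> forall {u v},
  connected_in R u v -> connected_in R (grid_meet u w) (grid_meet v w).
Proof. by move=> hw; apply: clos_rst_homo => u v Ruv; apply: (ts_restr hT Ruv hw). Qed.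

Lemma vertex_meet {r s} v {w} : vertex r s w -> vertex r s (grid_meet v w).
Proof.
by case=> w1 w2; split; rewrite /grid_meet /=; apply: leq_trans (geq_minr _ _) _.
Qed.

Lemma not_lex_lt_meet u v : ~ lex_lt u (grid_meet v u).
Proof. by rewrite /lex_lt /= !ltnNge !geq_minr; case=> // -[]. Qed.

Lemma grid_meet_idr_le u v : grid_meet v u = u -> u.1 <= v.1 /\ u.2 <= v.2.
Proof. by case: u v => [u1 u2] [v1 v2] [/minn_idPr ? /minn_idPr ?]. Qed.

Theorem mainTheorem9 (p q r s : nat) (hp : prime p) (hq : prime q) (hpq : p <> q)
  (R : nat * nat -> nat * nat -> Prop) (hT : transfer_system r s R)
  (a b : nat) (hmin : lex_min_of_component r s R (a, b)) :
  forall x y : nat, vertex r s (x, y) -> connected_in R (a, b) (x, y) -> a <= x /\ b <= y.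
Proof.
move=> x y _ conn_ab_xy; case: hmin => vab min_ab.
have conn_meet := connected_in_meet hT vab conn_ab_xy.
rewrite {1}/grid_meet /= !minnn in conn_meet.
have [meet_eq | /not_lex_lt_meet //] := min_ab _ (vertex_meet (x, y) vab) conn_meet.
exact: grid_meet_idr_le meet_eq.
Qed.
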